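(* Let $1\le k\le d$ and let $p_0p_1\cdots p_k$ be a non-degenerate $k$-simplex in $\mathbb{R}^d$ with real values $\tau(p_0),\dots,\tau(p_k)$ such that $\tau(p_0)\le\tau(p_i)$ for all $i$. Let $\sigma>0$ with $\|\nabla\tau\|<\sigma$, and let $0<\varepsilon<1$. Let $F=p_1\cdots p_k$, let $\bar p_0$ be the orthogonal projection of $p_0$ onto $\operatorname{aff}(F)$, and $d_{p_0}:=|p_0\bar p_0|$. For $\delta\ge0$ let $\tau'_\delta$ be the affine function on $\operatorname{aff}(p_0\cdots p_k)$ with $\tau'_\delta(p_0)=\tau(p_0)+\delta$ and $\tau'_\delta(p_i)=\tau(p_i)$ for $i\ge1$. (1) If $\bar p_0\in F$ and $\|\nabla\tau|_F\|\le(1-\varepsilon)\sigma$, then $\|\nabla\tau'_\delta\|<\sigma$ for every $\delta\in[0,\varepsilon\, d_{p_0}\,\sigma]$. (2) If $\bar p_0\notin F$, let $u$ be the point of $F$ closest to $\bar p_0$; if $\|\nabla\tau|_F\|\le(1-\varepsilon)\,\sigma\,\sin\angle p_0u\bar p_0$, then $\|\nabla\tau'_\delta\|<\sigma$ for every $\delta\in[0,\varepsilon\, d_{p_0}\,\sigma]$.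
   Context: Given values at the vertices of a simplex, $\tau$ also denotes the affine interpolating function on the affine hull of the simplex, and $\nabla\tau$ its gradient within that affine hull (a vector parallel to the hull), with Euclidean norm $\|\cdot\|$. $\nabla\tau|_F$ is the gradient of the restriction of $\tau$ to $\operatorname{aff}(F)$ (zero if $F$ is a single point). $\operatorname{aff}$ denotes affine hull. *)

(* R : rcfType (real closed field; generalizes the reals), points in 'rV[R]_d. *)
From HB Require Import structures.
From mathcomp Require Import all_boot all_order all_algebra.
Set Implicit Arguments. Unset Strict Implicit. Unset Printing Implicit Defensive.
Import Order.TTheory GRing.Theory Num.Theory.
Local Open Scope ring_scope.

Definition dot (R : rcfType) (d : nat) (u v : 'rV[R]_d) : R := (u *m v^T) 0 0.
Definition norm (R : rcfType) (d : nat) (u : 'rV[R]_d) : R := Num.sqrt (dot u u).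

Definition aff_indep (R : rcfType) (d : nat) (I : finType) (q : I -> 'rV[R]_d) :=
  forall c : I -> R, \sum_i c i = 0 -> \sum_i c i *: q i = 0 -> forall i, c i = 0.

Definition in_aff (R : rcfType) (d : nat) (I : finType) (q : I -> 'rV[R]_d) (x : 'rV[R]_d) :=
  exists c : I -> R, \sum_i c i = 1 /\ x = \sum_i c i *: q i.

Definition in_conv (R : rcfType) (d : nat) (I : finType) (q : I -> 'rV[R]_d) (x : 'rV[R]_d) :=
  exists c : I -> R, (forall i, 0 <= c i) /\ \sum_i c i = 1 /\ x = \sum_i c i *: q i.

(* g is the gradient, within the affine hull of the q's, of the affine function
   interpolating the values t at the q's: g is parallel to the hull (a zero-sum
   combination of the points) and g . (q i - q j) = t i - t j. For a single point,
   g = 0. For affinely independent points it exists and is unique. *)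
Definition is_grad (R : rcfType) (d : nat) (I : finType) (q : I -> 'rV[R]_d) (t : I -> R)
  (g : 'rV[R]_d) :=
  (exists c : I -> R, \sum_i c i = 0 /\ g = \sum_i c i *: q i) /\
  (forall i j, dot g (q i - q j) = t i - t j).

Definition facet (T : Type) (k : nat) (p : 'I_k.+1 -> T) : 'I_k -> T :=
  fun j => p (lift ord0 j).

Definition raise0 (R : rcfType) (k : nat) (tau : 'I_k.+1 -> R) (delta : R) : 'I_k.+1 -> R :=
  fun i => if i == ord0 then tau ord0 + delta else tau i.

Definition cos_angle (R : rcfType) (d : nat) (a b c : 'rV[R]_d) : R :=
  dot (a - b) (c - b) / (norm (a - b) * norm (c - b)).
Definition sin_angle (R : rcfType) (d : nat) (a b c : 'rV[R]_d) : R :=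
  Num.sqrt (1 - cos_angle a b c ^+ 2).

From HB Require Import structures.
From mathcomp Require Import all_boot all_order all_algebra.
From mathcomp Require Import ring lra.
Import Order.TTheory GRing.Theory Num.Theory.
Set Implicit Arguments.
Unset Strict Implicit.
Local Open Scope ring_scope.

(* Write n = p_0 - pbar for the height vector of the simplex over its facet F, and let
   g_F be the gradient of tau on F.  The gradient of the raised function tau'_delta is
   g_F + a n with a = (X + delta) / |n|^2, where the defect X = tau(p_0) - tau_F(pbar)
   compares p_0 with the affine extension tau_F of tau|F.  As g_F is orthogonal to n,
   |grad tau'_delta|^2 = |g_F|^2 + ((X + delta) / |n|)^2.  If X + delta <= 0, this is at
   most the value for delta = 0, i.e. |grad tau|^2 < sigma^2.  Otherwise fix any u in F:
   since tau(p_0) is minimal, tau_F(u) >= tau(p_0), hence X <= |g_F| |pbar - u|.  With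
   D = |p_0 - u| and L = |pbar - u| we have D^2 = |n|^2 + L^2 and sin(p_0 u pbar) = |n|/D,
   and the elementary inequality [budget_lt] concludes.  Part (2) is this argument for
   the given u, and part (1) is the case u = pbar, where the sine equals 1. *)

Section Euclid.
Variables (R : rcfType) (d : nat).
Implicit Types (u v w : 'rV[R]_d).

Lemma dotE u v : dot u v = \sum_j u 0 j * v 0 j.
Proof. by rewrite /dot !mxE; apply: eq_bigr => j _; rewrite mxE. Qed.

Lemma dotC u v : dot u v = dot v u.
Proof. by rewrite !dotE; apply: eq_bigr => j _; rewrite mulrC. Qed.

Lemma dotDr u v w : dot u (v + w) = dot u v + dot u w.
Proof. by rewrite /dot linearD mulmxDr mxE. Qed.

Lemma dotZr u a v : dot u (a *: v) = a * dot u v.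
Proof. by rewrite /dot linearZ -scalemxAr mxE. Qed.

Lemma dot0r u : dot u 0 = 0.
Proof. by rewrite -(scale0r 0) dotZr mul0r. Qed.

Lemma dotNr u v : dot u (- v) = - dot u v.
Proof. by rewrite -scaleN1r dotZr mulN1r. Qed.

Lemma dotBr u v w : dot u (v - w) = dot u v - dot u w.
Proof. by rewrite dotDr dotNr. Qed.

Lemma dotDl u v w : dot (u + v) w = dot u w + dot v w.
Proof. by rewrite !(dotC _ w) dotDr. Qed.

Lemma dotZl a u v : dot (a *: u) v = a * dot u v.
Proof. by rewrite !(dotC _ v) dotZr. Qed.

Lemma dotBl u v w : dot (u - v) w = dot u w - dot v w.
Proof. by rewrite !(dotC _ w) dotBr. Qed.

Lemma dot_sumr (I : finType) u (c : I -> R) (q : I -> 'rV[R]_d) :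
  dot u (\sum_i c i *: q i) = \sum_i c i * dot u (q i).
Proof.
rewrite (big_morph (dot u) (dotDr u) (dot0r u)).
by apply: eq_bigr => i _; rewrite dotZr.
Qed.

Lemma dot_ge0 v : 0 <= dot v v.
Proof. by rewrite dotE sumr_ge0 // => j _; rewrite -expr2 sqr_ge0. Qed.

Lemma dot_eq0 v : dot v v = 0 -> v = 0.
Proof.
rewrite dotE => /eqP; rewrite psumr_eq0 => [/allP v0|j _]; last by rewrite -expr2 sqr_ge0.
apply/rowP => j; rewrite mxE; apply/eqP.
by have := v0 j (mem_index_enum j); rewrite -expr2 sqrf_eq0.
Qed.

Lemma sqr_norm v : norm v ^+ 2 = dot v v.
Proof. by rewrite sqr_sqrtr // dot_ge0. Qed.

Lemma norm_ge0 v : 0 <= norm v.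
Proof. exact: sqrtr_ge0. Qed.

Lemma norm_gt0 v : v != 0 -> 0 < norm v.
Proof.
by move=> v0; rewrite sqrtr_gt0 lt_def dot_ge0 andbT; apply: contra v0 => /eqP/dot_eq0->.
Qed.

Lemma neg_dot_le u v : - dot u v <= norm u * norm v.
Proof.
have [->|u0] := eqVneq u 0; first by rewrite dotC dot0r oppr0 mulr_ge0 ?norm_ge0.
have [->|v0] := eqVneq v 0; first by rewrite dot0r oppr0 mulr_ge0 ?norm_ge0.
set w := norm v *: u + norm u *: v.
have ww : dot w w = 2 * (norm u * norm v) * (norm u * norm v + dot u v).
  by rewrite !(dotDl, dotDr, dotZl, dotZr) -!sqr_norm (dotC v u); ring.
have := dot_ge0 w.
by rewrite ww pmulr_rge0 ?mulr_gt0 ?norm_gt0 ?ltr0n //; lra.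
Qed.

Lemma sqr_normD_orth u v : dot u v = 0 -> norm (u + v) ^+ 2 = norm u ^+ 2 + norm v ^+ 2.
Proof. by move=> uv; rewrite !sqr_norm !(dotDl, dotDr) uv dotC uv addr0 add0r. Qed.
End Euclid.

(* The arithmetic core of the theorem: a vector with components r and y, bounded by the
   shares (1 - e) s c and (1 - e) s c' + e s of a budget s, has length below s whenever
   c^2 + c'^2 = 1 and c' < 1 (c, c' are the sine and cosine of an angle). *)
Lemma budget_lt (R : realFieldType) (e s c c' r y : R) :
  0 < e < 1 -> 0 < s -> c' < 1 -> c ^+ 2 + c' ^+ 2 = 1 ->
  0 <= r <= (1 - e) * s * c -> 0 <= y <= (1 - e) * s * c' + e * s ->
  r ^+ 2 + y ^+ 2 < s ^+ 2.
Proof.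
move=> /andP[e0 e1] s0 c'1 cc /andP[r0 r_le] /andP[y0 y_le].
have r2_le : r ^+ 2 <= ((1 - e) * s * c) ^+ 2.
  by rewrite ler_pXn2r ?nnegrE // (le_trans r0).
have y2_le : y ^+ 2 <= ((1 - e) * s * c' + e * s) ^+ 2.
  by rewrite ler_pXn2r ?nnegrE // (le_trans y0).
have total : ((1 - e) * s * c) ^+ 2 + ((1 - e) * s * c' + e * s) ^+ 2
           = s ^+ 2 - 2 * e * (1 - e) * s ^+ 2 * (1 - c').
  rewrite exprMn (_ : c ^+ 2 = 1 - c' ^+ 2); last by rewrite -cc addrK.
  ring.
apply: le_lt_trans (lerD r2_le y2_le) _; rewrite total gtrDl oppr_lt0.
by rewrite !mulr_gt0 ?exprn_gt0 ?subr_gt0.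
Qed.

Section Gradient.
Variables (R : rcfType) (d : nat) (I : finType) (q : I -> 'rV[R]_d).

Lemma dot_comb_const v a (c : I -> R) :
  (forall i, dot v (q i) = a) -> dot v (\sum_i c i *: q i) = (\sum_i c i) * a.
Proof. by move=> va; rewrite dot_sumr mulr_suml; apply: eq_bigr => i _; rewrite va. Qed.

Lemma grad_diff_of_offset t g a :
  (forall i, dot g (q i) - t i = a) -> forall i j, dot g (q i - q j) = t i - t j.
Proof. by move=> ga i j; rewrite dotBr; have := ga i; have := ga j; lra. Qed.

(* Gradients are unique: the difference of two gradients is orthogonal to all edges,
   hence to both gradients, hence to itself. *)
Lemma grad_unique (i0 : I) t1 t2 g1 g2 :
  t1 =1 t2 -> is_grad q t1 g1 -> is_grad q t2 g2 -> g1 = g2.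
Proof.
move=> t12 [[c1 [c1_0 g1E]] gd1] [[c2 [c2_0 g2E]] gd2].
set v := g1 - g2.
have v_const i : dot v (q i) = dot v (q i0).
  by apply/eqP; rewrite -subr_eq0 -dotBr /v dotBl gd1 gd2 !t12 subrr.
have vv : dot v v = 0.
  by rewrite {2}/v dotBr g1E g2E !(dot_comb_const _ v_const) c1_0 c2_0 mul0r subrr.
by apply/eqP; rewrite -subr_eq0 -/v (dot_eq0 vv).
Qed.

Definition affine_val (t : I -> R) (i0 : I) (g x : 'rV[R]_d) : R := t i0 + dot g (x - q i0).

(* On the convex hull, the interpolant is bounded below by any lower bound of its
   vertex values (it is a convex combination of them). *)
Lemma affine_val_conv_ge t g i0 m x :
  is_grad q t g -> (forall i, m <= t i) -> in_conv q x -> m <= affine_val t i0 g x.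
Proof.
move=> [_ gd] tm [c [c_ge0 [c1 ->]]].
have g_off i : dot g (q i) = t i + (dot g (q i0) - t i0).
  by have := gd i i0; rewrite dotBr; lra.
have val_comb : affine_val t i0 g (\sum_i c i *: q i) = \sum_i c i * t i.
  rewrite /affine_val dotBr dot_sumr.
  under eq_bigr do rewrite g_off mulrDr.
  by rewrite big_split /= -mulr_suml c1 mul1r g_off; lra.
rewrite val_comb -[m]mul1r -c1 mulr_suml; apply: ler_sum => i _.
exact: ler_wpM2l.
Qed.

End Gradient.

Section Raise.
Variables (R : rcfType) (d k : nat) (p : 'I_k.+1 -> 'rV[R]_d) (tau : 'I_k.+1 -> R).
Variable pbar : 'rV[R]_d.
Hypothesis k_gt0 : (0 < k)%N.
Hypothesis p_indep : aff_indep p.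
Hypothesis pbar_aff : in_aff (facet p) pbar.
Hypothesis pbar_orth : forall i j, dot (p ord0 - pbar) (facet p i - facet p j) = 0.

Local Notation q := (facet p).
Local Notation tq := (facet tau).
Local Notation j0 := (Ordinal k_gt0).
Local Notation n := (p ord0 - pbar).

Lemma height_dot_facet j : dot n (q j) = dot n (q j0).
Proof. by apply/eqP; rewrite -subr_eq0 -dotBr pbar_orth. Qed.

Lemma height_dot_aff x : in_aff q x -> dot n x = dot n (q j0).
Proof. by case=> c [c1 ->]; rewrite (dot_comb_const _ height_dot_facet) c1 mul1r. Qed.

(* The height is nonzero, since p_0 is not in aff(F) by affine independence. *)
Lemma height_neq0 : n != 0.
Proof.
apply/eqP => /eqP; rewrite subr_eq0 => /eqP p0_eq.
case: pbar_aff => c [c1 pbarE].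
pose h i := if unlift ord0 i is Some j then - c j else 1.
suff : h ord0 = 0 by rewrite /h unlift_none => /eqP; rewrite oner_eq0.
apply: p_indep.
  by rewrite big_ord_recl /h unlift_none; under eq_bigr do rewrite liftK; rewrite sumrN c1 subrr.
rewrite big_ord_recl /h unlift_none; under eq_bigr do rewrite liftK scaleNr.
by rewrite sumrN scale1r p0_eq pbarE subrr.
Qed.

Lemma height_gt0 : 0 < norm n.
Proof. exact: norm_gt0 height_neq0. Qed.

(* A gradient on F is parallel to aff(F), hence orthogonal to the height. *)
Lemma grad_orth_height gF : is_grad q tq gF -> dot gF n = 0.
Proof.
by case=> [[e [e0 ->]] _]; rewrite dotC (dot_comb_const _ height_dot_facet) e0 mul0r.
Qed.

Definition defect gF := tau ord0 - affine_val q tq j0 gF pbar.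

Definition raise_grad gF delta := gF + ((defect gF + delta) / dot n n) *: n.

Lemma raise_grad_is_grad gF delta :
  is_grad q tq gF -> is_grad p (raise0 tau delta) (raise_grad gF delta).
Proof.
move=> gF_grad; set a := (defect gF + delta) / dot n n.
have a_nn : a * dot n n = defect gF + delta.
  by rewrite /a divfK // -sqr_norm expf_neq0 // gt_eqF // height_gt0.
have gF_off j : dot gF (q j) - tq j = dot gF (q j0) - tq j0.
  by case: gF_grad => _ gd; have := gd j j0; rewrite dotBr; lra.
split.
  case: gF_grad => [[e [e0 gFE]] _]; case: pbar_aff => c [c1 pbarE].
  exists (fun i => if unlift ord0 i is Some j then e j - a * c j else a); split.
    rewrite big_ord_recl unlift_none; under eq_bigr do rewrite liftK.
    by rewrite sumrB e0 -mulr_sumr c1 mulr1 sub0r subrr.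
  rewrite big_ord_recl unlift_none; under eq_bigr do rewrite liftK scalerBl -scalerA.
  by rewrite sumrB -scaler_sumr -pbarE -gFE /raise_grad -/a scalerBr addrCA.
apply: (grad_diff_of_offset (a := dot gF (q j0) - tq j0 + a * dot n (q j0))) => i.
rewrite /raise_grad -/a dotDl dotZl.
case: (unliftP ord0 i) => [j ->|->].
  rewrite /raise0 eq_sym (negbTE (neq_lift _ _)) height_dot_facet.
  by have := gF_off j; rewrite /facet; lra.
have p0_split v : dot v (p ord0) = dot v n + dot v pbar by rewrite -dotDr subrK.
rewrite /raise0 eqxx !p0_split (grad_orth_height gF_grad) mulrDr a_nn.
rewrite (height_dot_aff pbar_aff) /defect /affine_val dotBr; lra.
Qed.

Lemma raise_grad_sqr_norm gF delta : is_grad q tq gF ->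
  norm (raise_grad gF delta) ^+ 2 = norm gF ^+ 2 + ((defect gF + delta) / norm n) ^+ 2.
Proof.
move=> gF_grad; rewrite /raise_grad sqr_normD_orth; last first.
  by rewrite dotZr (grad_orth_height gF_grad) mulr0.
rewrite [in norm (_ *: n) ^+ 2]sqr_norm dotZl dotZr -sqr_norm.
by field; rewrite gt_eqF // height_gt0.
Qed.

(* While defect + delta <= 0, raising only shrinks the height part compared to
   delta = 0, which gives the original gradient; so it suffices to control the case
   defect + delta > 0. *)
Lemma raise_grad_norm_lt g gF delta sigma :
  is_grad p tau g -> norm g < sigma -> is_grad q tq gF -> 0 <= delta ->
  (0 < defect gF + delta ->
     norm gF ^+ 2 + ((defect gF + delta) / norm n) ^+ 2 < sigma ^+ 2) ->
  norm (raise_grad gF delta) < sigma.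
Proof.
move=> g_grad g_lt gF_grad delta_ge0 upward.
have sigma_ge0 : 0 <= sigma by apply: le_trans (ltW g_lt); exact: norm_ge0.
rewrite -(ltr_pXn2r (ltn0Sn 1)) ?nnegrE ?norm_ge0 // raise_grad_sqr_norm //.
have [h_gt0|h_le0] := ltP 0 (defect gF + delta); first exact: upward.
have g_lift : g = raise_grad gF 0.
  apply: (grad_unique ord0 _ g_grad (raise_grad_is_grad 0 gF_grad)).
  by move=> i; rewrite /raise0; case: eqP => [->|]; rewrite ?addr0.
apply: le_lt_trans (_ : norm g ^+ 2 < sigma ^+ 2); last first.
  by rewrite ltr_pXn2r ?nnegrE ?norm_ge0.
rewrite g_lift raise_grad_sqr_norm // addr0 lerD2l !expr_div_n ler_pM2r; last first.
  by rewrite invr_gt0 exprn_gt0 // height_gt0.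
nra.
Qed.

Lemma height_orth_aff u : in_aff q u -> dot n (pbar - u) = 0.
Proof. by move=> u_aff; rewrite dotBr (height_dot_aff pbar_aff) (height_dot_aff u_aff) subrr. Qed.

Lemma foot_split u : p ord0 - u = n + (pbar - u).
Proof. by rewrite addrA subrK. Qed.

Lemma foot_pythagoras u : in_aff q u ->
  norm (p ord0 - u) ^+ 2 = norm n ^+ 2 + norm (pbar - u) ^+ 2.
Proof. by move=> u_aff; rewrite foot_split sqr_normD_orth // height_orth_aff. Qed.

Lemma foot_leg_lt u : in_aff q u -> norm (pbar - u) < norm (p ord0 - u).
Proof.
move=> u_aff; rewrite -(ltr_pXn2r (ltn0Sn 1)) ?nnegrE ?norm_ge0 //.
by rewrite foot_pythagoras // ltrDr exprn_gt0 // height_gt0.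
Qed.

Lemma sin_angle_foot u : in_aff q u ->
  sin_angle (p ord0) u pbar = norm n / norm (p ord0 - u).
Proof.
move=> u_aff; have DL := foot_pythagoras u_aff.
set D := norm (p ord0 - u) in DL *; set L := norm (pbar - u) in DL *.
have D_gt0 : 0 < D by exact: le_lt_trans (norm_ge0 _) (foot_leg_lt u_aff).
have cosE : cos_angle (p ord0) u pbar = L / D.
  rewrite /cos_angle -/D -/L (_ : dot (p ord0 - u) (pbar - u) = L ^+ 2); last first.
    by rewrite foot_split dotDl height_orth_aff // add0r sqr_norm.
  have [L0|L_neq0] := eqVneq L 0; first by rewrite L0 expr0n !(mul0r, mulr0, invr0).
  by field; rewrite L_neq0 gt_eqF.
have sin_sqr : 1 - (L / D) ^+ 2 = (norm n / D) ^+ 2.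
  have n2 : norm n ^+ 2 = D ^+ 2 - L ^+ 2 by rewrite DL addrK.
  by rewrite !expr_div_n n2; field; rewrite gt_eqF.
by rewrite /sin_angle cosE sin_sqr sqrtr_sqr ger0_norm // divr_ge0 ?norm_ge0 ?ltW.
Qed.

Lemma defect_le gF u : (forall i, tau ord0 <= tau i) -> is_grad q tq gF -> in_conv q u ->
  defect gF <= norm gF * norm (pbar - u).
Proof.
move=> tau_min gF_grad u_conv.
have above := affine_val_conv_ge j0 gF_grad (fun j => tau_min (lift ord0 j)) u_conv.
apply: le_trans (neg_dot_le gF (pbar - u)).
by move: above; rewrite /defect /affine_val !dotBr; lra.
Qed.

Lemma raise_below_sigma g gF u sigma eps delta :
  (forall i, tau ord0 <= tau i) -> is_grad p tau g -> norm g < sigma -> 0 < sigma ->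
  0 < eps < 1 -> in_conv q u -> is_grad q tq gF ->
  norm gF <= (1 - eps) * sigma * sin_angle (p ord0) u pbar ->
  0 <= delta <= eps * norm n * sigma ->
  norm (raise_grad gF delta) < sigma.
Proof.
move=> tau_min g_grad g_lt sigma_gt0 eps01 u_conv gF_grad gF_le /andP[delta_ge0 delta_le].
have u_aff : in_aff q u by case: u_conv => c [_ cE]; exists c.
have DL := foot_pythagoras u_aff; have drop := defect_le tau_min gF_grad u_conv.
rewrite sin_angle_foot // in gF_le.
set D := norm (p ord0 - u) in DL gF_le *; set L := norm (pbar - u) in DL drop *.
have n_gt0 := height_gt0; have L_ge0 : 0 <= L by exact: norm_ge0.
have L_lt_D : L < D by exact: foot_leg_lt.
have D_gt0 : 0 < D by exact: le_lt_trans L_lt_D.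
apply: (raise_grad_norm_lt g_grad g_lt gF_grad delta_ge0) => h_gt0.
apply: (budget_lt (c := norm n / D) (c' := L / D) eps01 sigma_gt0).
- by rewrite ltr_pdivrMr // mul1r.
- by rewrite !expr_div_n -mulrDl -DL divff // gt_eqF // exprn_gt0.
- by rewrite norm_ge0.
rewrite divr_ge0 ?(ltW h_gt0) ?(ltW n_gt0) //= ler_pdivrMr //.
have gF_L : norm gF * L <= (1 - eps) * sigma * (norm n / D) * L by exact: ler_wpM2r.
have -> : ((1 - eps) * sigma * (L / D) + eps * sigma) * norm n
        = (1 - eps) * sigma * (norm n / D) * L + eps * norm n * sigma by ring.
lra.
Qed.

End Raise.

Theorem mainTheorem6 (R : rcfType) (d k : nat) (p : 'I_k.+1 -> 'rV[R]_d)
  (tau : 'I_k.+1 -> R) (sigma eps : R) (pbar : 'rV[R]_d) :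
  (1 <= k)%N -> (k <= d)%N ->
  aff_indep p ->
  (forall i, tau ord0 <= tau i) ->
  0 < sigma ->
  (exists g, is_grad p tau g /\ norm g < sigma) ->
  0 < eps < 1 ->
  (* pbar = orthogonal projection of p_0 onto aff(F) *)
  in_aff (facet p) pbar ->
  (forall i j, dot (p ord0 - pbar) (facet p i - facet p j) = 0) ->
  (in_conv (facet p) pbar ->
     (exists gF, is_grad (facet p) (facet tau) gF /\ norm gF <= (1 - eps) * sigma) ->
     forall delta, 0 <= delta <= eps * norm (p ord0 - pbar) * sigma ->
       exists g', is_grad p (raise0 tau delta) g' /\ norm g' < sigma)
  /\
  (~ in_conv (facet p) pbar ->
     forall u, in_conv (facet p) u ->
     (forall x, in_conv (facet p) x -> norm (pbar - u) <= norm (pbar - x)) ->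
     (exists gF, is_grad (facet p) (facet tau) gF /\
                 norm gF <= (1 - eps) * sigma * sin_angle (p ord0) u pbar) ->
     forall delta, 0 <= delta <= eps * norm (p ord0 - pbar) * sigma ->
       exists g', is_grad p (raise0 tau delta) g' /\ norm g' < sigma).
Proof.
move=> k_gt0 _ p_indep tau_min sigma_gt0 [g [g_grad g_lt]] eps01 pbar_aff pbar_orth.
have raise u gF : in_conv (facet p) u -> is_grad (facet p) (facet tau) gF ->
    norm gF <= (1 - eps) * sigma * sin_angle (p ord0) u pbar ->
    forall delta, 0 <= delta <= eps * norm (p ord0 - pbar) * sigma ->
    exists g', is_grad p (raise0 tau delta) g' /\ norm g' < sigma.
  move=> u_conv gF_grad gF_le delta delta_bnd.
  exists (raise_grad p tau pbar k_gt0 gF delta); split.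
    exact: raise_grad_is_grad.
  exact: raise_below_sigma g_grad g_lt sigma_gt0 eps01 u_conv gF_grad gF_le delta_bnd.
split=> [pbar_conv [gF [gF_grad gF_le]] | _ u u_conv _ [gF [gF_grad gF_le]]].
  apply: (raise pbar gF pbar_conv gF_grad).
  rewrite (sin_angle_foot k_gt0 p_indep pbar_aff pbar_orth pbar_aff) divff ?mulr1 //.
  by rewrite gt_eqF // (height_gt0 p_indep pbar_aff).
exact: (raise u gF u_conv gF_grad gF_le).
Qed.
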